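(* Let $\mathcal G$ be a convex set of functions $\mathcal X\to\mathbb R^{d_y}$ with $0\in\mathcal G$, let $\theta>8$, $r>0$, $\alpha\in[1,2]$, $C>0$, $S\ge1$. Let $\partial B(r):=\{f\in\mathcal G:\|f\|_{L^2}=r\}$ and let $\mathcal F_r\subseteq\partial B(r)$ be an $r/\sqrt\theta$-cover of $\partial B(r)$ in the norm $\|f\|_\infty=\sup_x\|f(x)\|_2$ of minimal cardinality $N_\infty(\partial B(r),r/\sqrt\theta)$. Assume every $f\in\mathcal F_r$ satisfies $S$-persistence and $(C,\alpha)$-hypercontractivity. Define the event $$\mathcal A_r:=\Big\{\exists f\in\mathcal G:\ \|f\|_{L^2}>r,\ \tfrac1T\textstyle\sum_{t=0}^{T-1}\|f(X_t)\|_2^2\le\tfrac1\theta\|f\|_{L^2}^2\Big\}.$$ Then $$\mathsf P_X(\mathcal A_r)\le N_\infty\big(\partial B(r),\tfrac{r}{\sqrt\theta}\big)\exp\Big\{-\frac{8T\,r^{4-2\alpha}}{\theta^2CS}\Big\}.$$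
   Context: $X=(X_0,\dots,X_{T-1})$ is a random trajectory in a set $\mathcal X^T$ with law $\mathsf P_X$. For $f:\mathcal X\to\mathbb R^{d_y}$, $\|f\|_{L^2}^2:=\frac1T\sum_{t}\mathbb E\|f(X_t)\|_2^2$. A function $f$ satisfies $S$-persistence if for every $\xi\ge0$, $\mathbb E\exp(-\xi\sum_t\|f(X_t)\|_2^2)\le\exp\big(-\xi\sum_t\mathbb E\|f(X_t)\|_2^2+\frac{\xi^2S}{2}\sum_t\mathbb E\|f(X_t)\|_2^4\big)$. A function $f$ is $(C,\alpha)$-hypercontractive if $\frac1T\sum_t\mathbb E\|f(X_t)\|_2^4\le C\big(\frac1T\sum_t\mathbb E\|f(X_t)\|_2^2\big)^\alpha$. (In the paper, $\mathcal G$ is the shifted effective class $\{f-f_\star: f\in\mathcal F,\ \|\mathcal D(f-f_\star)\|_{L^2}^2\le\rho\}$, which is convex and contains $0$.) *)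

From HB Require Import structures.
From mathcomp Require Import all_boot all_order all_algebra.
From mathcomp Require Import all_classical all_reals all_analysis.
Set Implicit Arguments. Unset Strict Implicit. Unset Printing Implicit Defensive.
Import Order.TTheory GRing.Theory Num.Theory.
Local Open Scope classical_set_scope.
Local Open Scope ring_scope.

Section Defs.
Context {R : realType} {d : measure_display} {Omega : measurableType d}
  (P : probability Omega R) {dX : measure_display} {Xs : measurableType dX}
  {T : nat} (X : 'I_T -> Omega -> Xs) {dy : nat}.

Definition sqn (v : 'rV[R]_dy) : R := \sum_(i < dy) (v ord0 i) ^+ 2.
Definition norm2 (v : 'rV[R]_dy) : R := Num.sqrt (sqn v).

(* expectation of a real random variable (real-valued; meaningful when integrable) *)
Definition Ex (h : Omega -> R) : R := fine (\int[P]_w (h w)%:E).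

Definition L2sq (f : Xs -> 'rV[R]_dy) : R :=
  (T%:R)^-1 * \sum_(t < T) Ex (fun w => sqn (f (X t w))).
Definition L2norm (f : Xs -> 'rV[R]_dy) : R := Num.sqrt (L2sq f).
Definition L4avg (f : Xs -> 'rV[R]_dy) : R :=
  (T%:R)^-1 * \sum_(t < T) Ex (fun w => sqn (f (X t w)) ^+ 2).

Definition persistent (S : R) (f : Xs -> 'rV[R]_dy) : Prop :=
  (forall t : 'I_T, P.-integrable setT (fun w => (sqn (f (X t w)) ^+ 2)%:E)) /\
  forall xi : R, 0 <= xi ->
    Ex (fun w => expR (- xi * \sum_(t < T) sqn (f (X t w))))
    <= expR (- xi * \sum_(t < T) Ex (fun w => sqn (f (X t w)))
             + xi ^+ 2 * S / 2 * \sum_(t < T) Ex (fun w => sqn (f (X t w)) ^+ 2)).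

Definition hypercontractive (C alpha : R) (f : Xs -> 'rV[R]_dy) : Prop :=
  (forall t : 'I_T, P.-integrable setT (fun w => (sqn (f (X t w)) ^+ 2)%:E)) /\
  L4avg f <= C * (L2sq f) `^ alpha.

Definition sphere (G : set (Xs -> 'rV[R]_dy)) (r : R) : set (Xs -> 'rV[R]_dy) :=
  [set f | G f /\ L2norm f = r].

Definition event_A (G : set (Xs -> 'rV[R]_dy)) (theta r : R) : set Omega :=
  [set w | exists f, G f /\ r < L2norm f /\
     (T%:R)^-1 * \sum_(t < T) sqn (f (X t w)) <= theta^-1 * L2sq f].
End Defs.

Definition convex_fset {R : realType} {A : Type} {dy : nat}
  (G : set (A -> 'rV[R]_dy)) : Prop :=
  forall f g, G f -> G g -> forall l : R, 0 <= l <= 1 ->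
    G (fun x => l *: f x + (1 - l) *: g x).

Definition sup_cover {R : realType} {A : Type} {dy : nat}
  (B : set (A -> 'rV[R]_dy)) (eps : R) (N : nat) (F : 'I_N -> A -> 'rV[R]_dy) : Prop :=
  (forall i, B (F i)) /\
  forall g, B g -> exists i, forall x, norm2 (F i x - g x) <= eps.

From HB Require Import structures.
From mathcomp Require Import all_boot all_order all_algebra.
From mathcomp Require Import all_classical all_reals all_analysis.
From mathcomp Require Import ring lra measurable_realfun.
Set Implicit Arguments. Unset Strict Implicit. Unset Printing Implicit Defensive.
Import Order.TTheory GRing.Theory Num.Theory.
Local Open Scope classical_set_scope.
Local Open Scope ring_scope.

(* If the empirical energy of some f with ||f|| > r is at most ||f||^2/theta,
   rescaling f into the sphere of radius r (possible since G is convex and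
   contains 0) and replacing it by a sup-norm-close element of the cover shows
   that some cover element has empirical energy at most 4 T r^2 / theta, i.e.
   at most 4/theta times its expected energy T r^2.  For each cover element
   this lower-tail event is controlled by a Chernoff bound in which the
   persistence inequality bounds the moment generating function and
   hypercontractivity bounds the fourth moments; optimizing the Chernoff
   parameter and taking a union bound over the cover gives the estimate. *)

Section squared_norm.
Variables (R : realType) (dy : nat).
Implicit Types u v : 'rV[R]_dy.

Lemma sqn_ge0 v : 0 <= sqn v.
Proof. by apply: sumr_ge0 => i _; exact: sqr_ge0. Qed.

Lemma sqnZ l v : sqn (l *: v) = l ^+ 2 * sqn v.
Proof. by rewrite /sqn mulr_sumr; apply: eq_bigr => i _; rewrite mxE exprMn. Qed.

Lemma sqnD_le u v : sqn (u + v) <= 2 * sqn u + 2 * sqn v.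
Proof.
rewrite /sqn !mulr_sumr -big_split /=; apply: ler_sum => i _; rewrite mxE.
have := sqr_ge0 (u ord0 i - v ord0 i); nra.
Qed.

Lemma sqn_le_sqr v e : norm2 v <= e -> sqn v <= e ^+ 2.
Proof.
rewrite /norm2 => ve; rewrite -(sqr_sqrtr (sqn_ge0 v)).
by rewrite ler_sqr ?nnegrE ?sqrtr_ge0 // (le_trans (sqrtr_ge0 _) ve).
Qed.

End squared_norm.

Lemma Boole_inequality_ord d (T : measurableType d) (R : realType)
    (mu : {measure set T -> \bar R}) n (B : 'I_n -> set T) :
  (forall i, measurable (B i)) ->
  (mu (\big[setU/set0]_(i < n) B i) <= \sum_(i < n) mu (B i))%E.
Proof.
move=> mB; pose A k := if insub k is Some i then B i else set0.
have AE (i : 'I_n) : A i = B i by rewrite /A valK.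
have mA k : measurable (A k) by rewrite /A; case: insub.
have := @Boole_inequality _ _ _ mu A n (fun k _ => mA k).
by under eq_bigr do rewrite AE; under [X in (_ <= X)%E -> _]eq_bigr do rewrite AE.
Qed.

Section expectation.
Variables (R : realType) (d : measure_display) (Omega : measurableType d)
  (P : probability Omega R).
Implicit Types Y h : Omega -> R.

Lemma Ex_mull h k : P.-integrable setT (fun w => (h w)%:E) ->
  Ex P (fun w => k * h w) = k * Ex P h.
Proof.
move=> ih; rewrite /Ex.
under eq_integral => w _ do rewrite EFinM.
by rewrite integralZl // fineM //; exact: integrable_fin_num.
Qed.

Lemma measurable_sublevel Y c : measurable_fun setT Y ->
  measurable [set w | Y w <= c].
Proof. by move=> mY; rewrite -[X in measurable X]setTI -preimage_itvNyc; exact: mY. Qed.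

Lemma integrable_expR_Nscale Y xi : measurable_fun setT Y ->
  (forall w, 0 <= Y w) -> 0 <= xi ->
  P.-integrable setT (fun w => (expR (- xi * Y w))%:E).
Proof.
move=> mY Y0 xi0; apply: measurable_bounded_integrable => //.
- by rewrite (le_lt_trans (probability_le1 P measurableT)) ?ltry.
- apply: measurableT_comp; first exact: measurable_expR.
  exact: measurable_funM.
- exists 1; split => // x x1 w _ /=; rewrite ger0_norm ?expR_ge0 //.
  apply: le_trans (ltW x1); rewrite -expR0 ler_expR; have := Y0 w; nra.
Qed.

Lemma chernoff_lower_tail Y c xi : measurable_fun setT Y -> 0 < xi ->
  P.-integrable setT (fun w => (expR (- xi * Y w))%:E) ->
  (P [set w | (Y w <= c)%R] <= (expR (xi * c) * Ex P (fun w => expR (- xi * Y w)))%:E)%E.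
Proof.
move=> mY xi0 iY.
pose Z : {RV P >-> R} :=
  HB.pack (fun w => - Y w) (isMeasurableFun.Build _ _ _ _ _ (measurable_funN mY)).
have := chernoff Z (- c) xi0.
rewrite mulrN opprK /mmt_gen_fun unlock /Ex EFinM fineK; last exact: integrable_fin_num.
have -> : [set w | Y w <= c] = [set w | - c <= Z w].
  by apply/seteqP; split => w /=; rewrite lerN2.
have -> : (\int[P]_w ((expR \o xi \o* Z) w)%:E = \int[P]_w (expR (- xi * Y w))%:E)%E.
  by apply: eq_integral => w _ /=; rewrite !mulNr mulrC.
by rewrite muleC.
Qed.

End expectation.

Lemma chernoff_exponent_le (R : realFieldType) (t u S C q theta xi : R) :
  0 < t -> 0 < u -> 0 < S -> 0 < C -> 0 < q -> 8 < theta ->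
  xi = u / (2 * S * C * q) ->
  xi * (4 * t * u / theta) - xi * (t * u) + xi ^+ 2 * S / 2 * (t * C * q)
  <= - (8 * t * (u ^+ 2 / q)) / (theta ^+ 2 * C * S).
Proof.
move=> t0 u0 S0 C0 q0 th8 ->.
have th0 : 0 < theta by lra.
set W := t * u ^+ 2 / (S * C * q).
have W0 : 0 < W by rewrite divr_gt0 ?mulr_gt0 ?exprn_gt0.
have -> : u / (2 * S * C * q) * (4 * t * u / theta) - u / (2 * S * C * q) * (t * u)
    + (u / (2 * S * C * q)) ^+ 2 * S / 2 * (t * C * q) = W * (2 / theta - 3 / 8).
  by rewrite /W; field; rewrite !(gt_eqF, mulr_gt0).
have -> : - (8 * t * (u ^+ 2 / q)) / (theta ^+ 2 * C * S) = W * (- 8 / theta ^+ 2).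
  by rewrite /W; field; rewrite !(gt_eqF, mulr_gt0, exprn_gt0).
rewrite ler_pM2l //; set v := theta^-1.
have v0 : 0 < v by rewrite invr_gt0.
have v8 : v < 8^-1 by rewrite ltf_pV2 ?posrE //; lra.
have -> : - 8 / theta ^+ 2 = - 8 * v ^+ 2 by rewrite exprVn.
have : (v - 8^-1) * (8 * v + 3) <= 0 by apply: mulr_le0_ge0; lra.
nra.
Qed.

Lemma powR_4_sub_2mul (R : realType) (r a : R) : 0 < r ->
  r `^ (4 - 2 * a) = (r ^+ 2) ^+ 2 / (r ^+ 2) `^ a.
Proof.
move=> r0; rewrite powRB; last by apply/implyP => _; rewrite gt_eqF.
by rewrite -exprM -(powR_mulrn _ (ltW r0)) powRrM -(powR_mulrn 2) ?ltW.
Qed.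

Section trajectory.
Variables (R : realType) (d : measure_display) (Omega : measurableType d)
  (P : probability Omega R) (dX : measure_display) (Xs : measurableType dX)
  (T : nat) (X : 'I_T -> Omega -> Xs) (dy : nat).
Hypothesis T_gt0 : (0 < T)%N.
Implicit Types f : Xs -> 'rV[R]_dy.

Definition energy f w : R := \sum_(t < T) sqn (f (X t w)).

Definition sqn_integrable f :=
  forall t, P.-integrable setT (fun w => (sqn (f (X t w)))%:E).

Lemma energy_ge0 f w : 0 <= energy f w.
Proof. by apply: sumr_ge0 => t _; exact: sqn_ge0. Qed.

Lemma measurable_energy f : (forall t, measurable_fun setT (X t)) ->
  (forall i, measurable_fun setT (fun x => f x ord0 i)) ->
  measurable_fun setT (energy f).
Proof.
move=> mX mf; apply: measurable_sum => t; apply: measurable_sum => i.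
exact/measurable_funX/(measurableT_comp (mf i) (mX t)).
Qed.

Lemma L2sqZ f l : sqn_integrable f ->
  L2sq P X (fun x => l *: f x) = l ^+ 2 * L2sq P X f.
Proof.
move=> iF; rewrite /L2sq [RHS]mulrCA; congr (_ * _).
rewrite mulr_sumr; apply: eq_bigr => t _.
by rewrite -Ex_mull //; congr Ex; apply: funext => w; rewrite sqnZ.
Qed.

Lemma L2sq_sphere G r f : 0 < r -> sphere P X G r f -> L2sq P X f = r ^+ 2.
Proof.
move=> r0 [_ Lf]; have L0 : 0 < L2sq P X f by rewrite -sqrtr_gt0 -/(L2norm P X f) Lf.
by rewrite -Lf sqr_sqrtr // ltW.
Qed.

Lemma sphere_rescale G r f : convex_fset G -> G (fun _ => 0) ->
  sqn_integrable f -> G f -> 0 < r -> r < L2norm P X f ->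
  exists l, sphere P X G r (fun x => l *: f x) /\ l ^+ 2 * L2sq P X f = r ^+ 2.
Proof.
move=> cG G0 iF Gf r0 rf; set L := L2sq P X f.
have sL0 : 0 < Num.sqrt L by exact: lt_trans rf.
have L0 : 0 < L by rewrite -sqrtr_gt0.
pose l := r / Num.sqrt L.
have l01 : 0 <= l <= 1 by rewrite divr_ge0 ?ler_pdivrMr ?mul1r ?ltW.
have lL : l ^+ 2 * L = r ^+ 2 by rewrite expr_div_n sqr_sqrtr ?ltW // divfK ?gt_eqF.
exists l; split=> //; split.
  have := cG f (fun _ => 0) Gf G0 l l01.
  by congr G; apply: funext => x; rewrite scaler0 addr0.
by rewrite /L2norm L2sqZ // lL sqrtr_sqr gtr0_norm.
Qed.

Lemma persistent_lower_tail f S c xi :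
  (forall t, measurable_fun setT (X t)) ->
  (forall i, measurable_fun setT (fun x => f x ord0 i)) ->
  persistent P X S f -> 0 < xi ->
  (P [set w | (energy f w <= c)%R] <=
    (expR (xi * c - xi * \sum_(t < T) Ex P (fun w => sqn (f (X t w)))
       + xi ^+ 2 * S / 2 * \sum_(t < T) Ex P (fun w => sqn (f (X t w)) ^+ 2)))%:E)%E.
Proof.
move=> mX mf [_ mgf] xi0.
have mE := measurable_energy mX mf.
have iE := integrable_expR_Nscale P mE (energy_ge0 f) (ltW xi0).
move/le_trans: (chernoff_lower_tail c mE xi0 iE); apply.
by rewrite lee_fin -addrA -mulNr expRD ler_wpM2l ?expR_ge0 //; exact: mgf (ltW xi0).
Qed.

Lemma sphere_lower_tail f theta r alpha C S :
  (forall t, measurable_fun setT (X t)) ->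
  (forall i, measurable_fun setT (fun x => f x ord0 i)) ->
  8 < theta -> 0 < r -> 0 < C -> 1 <= S -> L2sq P X f = r ^+ 2 ->
  persistent P X S f -> hypercontractive P X C alpha f ->
  (P [set w | (energy f w <= 4 * T%:R * r ^+ 2 / theta)%R] <=
    (expR (- (8 * T%:R * r `^ (4 - 2 * alpha)) / (theta ^+ 2 * C * S)))%:E)%E.
Proof.
move=> mX mf th8 r0 C0 S1 Lf pf [_ hc].
have T0 : 0 < T%:R :> R by rewrite ltr0n.
set q := (r ^+ 2) `^ alpha.
have q0 : 0 < q by rewrite powR_gt0 // exprn_gt0.
set xi := r ^+ 2 / (2 * S * C * q).
have xi0 : 0 < xi by rewrite divr_gt0 ?exprn_gt0 // !mulr_gt0 //; lra.
move/le_trans: (persistent_lower_tail (4 * T%:R * r ^+ 2 / theta) mX mf pf xi0); apply.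
have second : \sum_(t < T) Ex P (fun w => sqn (f (X t w))) = T%:R * r ^+ 2.
  by rewrite -Lf /L2sq mulVKf ?gt_eqF.
have fourth : \sum_(t < T) Ex P (fun w => sqn (f (X t w)) ^+ 2) <= T%:R * C * q.
  move: hc; rewrite /L4avg Lf -(ler_pM2l T0) mulVKf ?gt_eqF // => hc.
  by rewrite -mulrA.
rewrite lee_fin ler_expR second powR_4_sub_2mul //.
have S0 : 0 < S by lra.
have := chernoff_exponent_le T0 (exprn_gt0 2 r0) S0 C0 q0 th8 (erefl xi).
apply: le_trans; rewrite lerD2l; apply: ler_wpM2l fourth.
by rewrite divr_ge0 // mulr_ge0 ?sqr_ge0 // ltW.
Qed.

Lemma event_A_sub_lower_tails G theta r N (F : 'I_N -> Xs -> 'rV[R]_dy) :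
  convex_fset G -> G (fun _ => 0) -> (forall f, G f -> sqn_integrable f) ->
  0 < theta -> 0 < r -> sup_cover (sphere P X G r) (r / Num.sqrt theta) F ->
  event_A P X G theta r `<=`
    \big[setU/set0]_(i < N) [set w | energy (F i) w <= 4 * T%:R * r ^+ 2 / theta].
Proof.
move=> cG G0 iG th0 r0 [_ cover] w [f [Gf [rf small]]].
have [l [Sg lL]] := sphere_rescale cG G0 (iG f Gf) Gf r0 rf.
have [i close] := cover _ Sg.
rewrite -bigcup_seq; exists i => /=; first exact: mem_index_enum.
have T0 : 0 < T%:R :> R by rewrite ltr0n.
have energy_f : energy f w <= T%:R * (L2sq P X f / theta).
  have := ler_wpM2l (ltW T0) small; rewrite mulVKf ?lt0r_neq0 //.
  by rewrite (mulrC (L2sq P X f)).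
have close_t t : sqn (F i (X t w)) <= 2 * (r ^+ 2 / theta) + 2 * sqn (l *: f (X t w)).
  rewrite -[F i _](subrK (l *: f (X t w))); apply: le_trans (sqnD_le _ _) _.
  rewrite lerD2r ler_pM2l //; apply: le_trans (sqn_le_sqr (close _)) _.
  by rewrite expr_div_n sqr_sqrtr // ltW.
have lE : l ^+ 2 * energy f w <= T%:R * r ^+ 2 / theta.
  have -> : T%:R * r ^+ 2 / theta = l ^+ 2 * (T%:R * (L2sq P X f / theta)).
    by rewrite -lL; ring.
  exact: (ler_wpM2l (sqr_ge0 l) energy_f).
apply: le_trans (ler_sum _ (fun t _ => close_t t)) _.
rewrite big_split /= sumr_const card_ord -mulr_natr -mulr_sumr.
under eq_bigr do rewrite sqnZ.
rewrite -mulr_sumr -/(energy f w); lra.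
Qed.

End trajectory.

Theorem mainTheorem7 (R : realType) (d : measure_display) (Omega : measurableType d)
  (P : probability Omega R) (dX : measure_display) (Xs : measurableType dX)
  (T : nat) (X : 'I_T -> Omega -> Xs) (dy : nat)
  (G : set (Xs -> 'rV[R]_dy)) (theta r alpha C S : R)
  (N : nat) (Fr : 'I_N -> Xs -> 'rV[R]_dy) :
  (0 < T)%N ->
  (forall t, measurable_fun setT (X t)) ->
  (forall f, G f -> forall i : 'I_dy, measurable_fun setT (fun x => f x ord0 i)) ->
  (forall f, G f -> forall t, P.-integrable setT (fun w => (sqn (f (X t w)))%:E)) ->
  convex_fset G -> G (fun _ => 0) ->
  8 < theta -> 0 < r -> 1 <= alpha <= 2 -> 0 < C -> 1 <= S ->
  sup_cover (sphere P X G r) (r / Num.sqrt theta) Fr ->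
  (forall M (F' : 'I_M -> Xs -> 'rV[R]_dy),
     sup_cover (sphere P X G r) (r / Num.sqrt theta) F' -> (N <= M)%N) ->
  (forall i, persistent P X S (Fr i)) ->
  (forall i, hypercontractive P X C alpha (Fr i)) ->
  exists B : set Omega, measurable B /\ event_A P X G theta r `<=` B /\
    (P B <= (N%:R * expR (- (8 * T%:R * r `^ (4 - 2 * alpha))
                            / (theta ^+ 2 * C * S)))%:E)%E.
Proof.
move=> T0 mX mG iG cG G0 th8 r0 _ C0 S1 cover _ pers hyp.
have [coverG _] := cover.
pose tail i := [set w | (energy X (Fr i) w <= 4 * T%:R * r ^+ 2 / theta)%R].
have mtail i : measurable (tail i).
  by apply: measurable_sublevel; apply: measurable_energy mX (mG _ (coverG i).1).
exists (\big[setU/set0]_(i < N) tail i); split; first exact: bigsetU_measurable.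
split; first by apply: event_A_sub_lower_tails cover => //; lra.
apply: le_trans (Boole_inequality_ord P mtail) _.
set e := expR _; have -> : (N%:R * e)%:E = (\sum_(i < N) e%:E)%E.
  by rewrite sumEFin sumr_const card_ord mulr_natl.
apply: lee_sum => i _.
apply: sphere_lower_tail => //; first exact: mG (coverG i).1.
exact: L2sq_sphere (coverG i).
Qed.
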